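(* In the setting described in the context, the empirical cost functions $f_t(\mathbf{L})$ are uniformly bounded and Lipschitz in $\mathbf{L}$.
   Context: Fix integers $p,r\ge 1$ and constants $\lambda_1,\lambda_2>0$. Let $\mathcal{G}$ be a finite collection of subsets of $\{1,\dots,p\}$. For $\mathbf{s}\in\mathbb{R}^p$ and $g\in\mathcal{G}$, let $\mathbf{s}_{|g}$ be the vector equal to $\mathbf{s}$ on indices in $g$ and zero elsewhere, and $\|\mathbf{s}\|_{\ell_1/\ell_\infty}=\sum_{g\in\mathcal{G}}\|\mathbf{s}_{|g}\|_\infty$. Define $\hat\ell(\mathbf{d},\mathbf{L},\mathbf{r},\mathbf{s})=\tfrac12\|\mathbf{d}-\mathbf{L}\mathbf{r}-\mathbf{s}\|_2^2+\tfrac{\lambda_1}{2}\|\mathbf{r}\|_2^2+\lambda_2\|\mathbf{s}\|_{\ell_1/\ell_\infty}$ and $\ell(\mathbf{d},\mathbf{L})=\min_{\mathbf{r},\mathbf{s}}\hat\ell(\mathbf{d},\mathbf{L},\mathbf{r},\mathbf{s})$. Data $\mathbf{d}_1,\mathbf{d}_2,\dots\in\mathbb{R}^p$ are independent and uniformly bounded (there is $M$ with $\|\mathbf{d}_t\|_2\le M$ for all $t$). The empirical cost function is $f_t(\mathbf{L})=\frac1t\sum_{i=1}^t\ell(\mathbf{d}_i,\mathbf{L})+\frac{\lambda_1}{2t}\|\mathbf{L}\|_F^2$, considered for $\mathbf{L}$ in a compact set $\mathcal{L}\subset\mathbb{R}^{p\times r}$ (the set containing the iterates of the online algorithm $\mathbf{L}_t=\mathbf{B}_t(\mathbf{A}_t+\lambda_1\mathbf{I})^{-1}$,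 $\mathbf{A}_t=\sum_{i\le t}\mathbf{r}_i\mathbf{r}_i^T$, $\mathbf{B}_t=\sum_{i\le t}(\mathbf{d}_i-\mathbf{s}_i)\mathbf{r}_i^T$, with $(\mathbf{r}_i,\mathbf{s}_i)$ a minimizer of $\hat\ell(\mathbf{d}_i,\mathbf{L}_{i-1},\cdot,\cdot)$). ''Uniformly'' means with constants independent of $t$. *)

From HB Require Import structures.
From mathcomp Require Import all_boot all_order all_algebra.
From mathcomp Require Import all_classical all_reals all_analysis.
Set Implicit Arguments. Unset Strict Implicit. Unset Printing Implicit Defensive.
Import Order.TTheory GRing.Theory Num.Theory.
Import numFieldNormedType.Exports.
Local Open Scope ring_scope.
Local Open Scope classical_set_scope.

Section Defs.
Variable R : realType.

Definition sqnorm2 (n : nat) (v : 'cV[R]_n) : R := \sum_(i < n) (v i 0) ^+ 2.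

Definition frob (m n : nat) (A : 'M[R]_(m, n)) : R :=
  Num.sqrt (\sum_(i < m) \sum_(j < n) (A i j) ^+ 2).

Definition restr_inf (p : nat) (s : 'cV[R]_p) (g : {set 'I_p}) : R :=
  \big[Num.max/0]_(i in g) `|s i 0|.

Definition l1linf (p : nat) (G : {set {set 'I_p}}) (s : 'cV[R]_p) : R :=
  \sum_(g in G) restr_inf s g.

Definition lhat (p r : nat) (G : {set {set 'I_p}}) (lam1 lam2 : R)
  (d : 'cV[R]_p) (L : 'M[R]_(p, r)) (x : 'cV[R]_r) (s : 'cV[R]_p) : R :=
  2^-1 * sqnorm2 (d - L *m x - s) + lam1 / 2 * sqnorm2 x + lam2 * l1linf G s.

(* l (d, L) = min_{r,s} \hat l  (the minimum exists; stated as the infimum) *)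
Definition ell (p r : nat) (G : {set {set 'I_p}}) (lam1 lam2 : R)
  (d : 'cV[R]_p) (L : 'M[R]_(p, r)) : R :=
  inf (range (fun xs : 'cV[R]_r * 'cV[R]_p => lhat G lam1 lam2 d L xs.1 xs.2)).

Definition emp_cost (p r : nat) (G : {set {set 'I_p}}) (lam1 lam2 : R)
  (d : nat -> 'cV[R]_p) (t : nat) (L : 'M[R]_(p, r)) : R :=
  t%:R^-1 * (\sum_(1 <= i < t.+1) ell G lam1 lam2 (d i) L)
  + lam1 / (2 * t%:R) * (frob L) ^+ 2.

End Defs.

(* Taking r = s = 0 gives 0 <= l(d, L) <= |d|^2 / 2 <= M^2 / 2, and a compact set of
   matrices is bounded in Frobenius norm, so f_t is uniformly bounded.
   For the Lipschitz bound, a near-minimiser (r, s) of l(d, L2) lies on a sublevel set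
   of \hat l, where |r|^2 <= 2V / lam1 and the residual a = d - L2 r - s has
   |a|^2 <= 2V.  Since d - L1 r - s = a - (L1 - L2) r, evaluating \hat l(d, L1, r, s)
   bounds l(d, L1) - l(d, L2) by (|a| |r| + |L1 - L2|_F |r|^2 / 2) |L1 - L2|_F.
   The regulariser |L|_F^2 is Lipschitz on bounded sets, and averaging over the
   samples preserves both bounds with constants independent of t. *)

From HB Require Import structures.
From mathcomp Require Import all_boot all_order all_algebra.
From mathcomp Require Import all_classical all_reals all_analysis.
From mathcomp Require Import ring lra.
Set Implicit Arguments. Unset Strict Implicit. Unset Printing Implicit Defensive.
Import Order.TTheory GRing.Theory Num.Theory.
Import numFieldNormedType.Exports.
Local Open Scope ring_scope.
Local Open Scope classical_set_scope.

Section L2Norm.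
Variable R : realType.

Definition l2norm (I : finType) (f : I -> R) := Num.sqrt (\sum_i f i ^+ 2).

Lemma l2norm_ge0 (I : finType) (f : I -> R) : 0 <= l2norm f.
Proof. exact: sqrtr_ge0. Qed.

Lemma sumr_sqr_ge0 (I : finType) (f : I -> R) : 0 <= \sum_i f i ^+ 2.
Proof. by apply: sumr_ge0 => i _; exact: sqr_ge0. Qed.

Lemma sqr_l2norm (I : finType) (f : I -> R) : l2norm f ^+ 2 = \sum_i f i ^+ 2.
Proof. exact/sqr_sqrtr/sumr_sqr_ge0. Qed.

Lemma cauchy_schwarz (I : finType) (f g : I -> R) :
  (\sum_i f i * g i) ^+ 2 <= (\sum_i f i ^+ 2) * (\sum_i g i ^+ 2).
Proof.
set F := \sum_i f i ^+ 2; set G := \sum_i g i ^+ 2; set C := \sum_i f i * g i.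
have lagrange : \sum_i \sum_j (f i * g j - f j * g i) ^+ 2 = 2 * (F * G - C ^+ 2).
  transitivity (\sum_i (f i ^+ 2 * G + g i ^+ 2 * F - 2 * (f i * g i) * C)).
    apply: eq_bigr => i _; rewrite /F /G /C !mulr_sumr -!big_split -sumrB /=.
    by apply: eq_bigr => j _; ring.
  rewrite sumrB big_split /= -!mulr_suml -mulr_sumr -/F -/G -/C; ring.
have : 0 <= \sum_i \sum_j (f i * g j - f j * g i) ^+ 2.
  by apply: sumr_ge0 => i _; exact: sumr_sqr_ge0.
rewrite lagrange; lra.
Qed.

Lemma cauchy_schwarz_l2norm (I : finType) (f g : I -> R) :
  `|\sum_i f i * g i| <= l2norm f * l2norm g.
Proof.
rewrite -sqrtrM ?sumr_sqr_ge0 // -sqrtr_sqr ler_wsqrtr //; exact: cauchy_schwarz.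
Qed.

Lemma l2normD (I : finType) (f g : I -> R) :
  l2norm (fun i => f i + g i) <= l2norm f + l2norm g.
Proof.
rewrite -[leRHS]ger0_norm ?addr_ge0 ?l2norm_ge0 // -sqrtr_sqr ler_wsqrtr //.
have expand : \sum_i (f i + g i) ^+ 2
    = \sum_i f i ^+ 2 + 2 * \sum_i f i * g i + \sum_i g i ^+ 2.
  by rewrite mulr_sumr -!big_split; apply: eq_bigr => i _ /=; ring.
rewrite expand sqrrD !sqr_l2norm -mulr_natl.
have := ler_norm (\sum_i f i * g i); have := cauchy_schwarz_l2norm f g; lra.
Qed.

Lemma l2normN (I : finType) (f : I -> R) : l2norm (fun i => - f i) = l2norm f.
Proof. by congr Num.sqrt; apply: eq_bigr => i _; rewrite sqrrN. Qed.

End L2Norm.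

Lemma avg_norm_le (R : realType) (a : nat -> R) t c : (1 <= t)%N ->
  (forall i, (1 <= i <= t)%N -> `|a i| <= c) ->
  `|t%:R^-1 * \sum_(1 <= i < t.+1) a i| <= c.
Proof.
move=> t_ge1 a_le; have t_gt0 : 0 < t%:R :> R by rewrite ltr0n.
have sum_le : `|\sum_(1 <= i < t.+1) a i| <= t%:R * c.
  have -> : t%:R * c = \sum_(1 <= i < t.+1) c.
    by rewrite sumr_const_nat subn1 mulr_natl.
  apply: le_trans (ler_norm_sum _ _ _) (ler_sum_nat _) => i /andP[i_ge1 i_lt].
  by apply: a_le; rewrite i_ge1 -ltnS.
rewrite normrM ger0_norm ?invr_ge0 ?ler0n // -(ler_pM2l t_gt0) mulrA.
by rewrite mulfV ?gt_eqF // mul1r.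
Qed.

Lemma inv_natr_ge0_le1 (R : realType) t : (1 <= t)%N -> 0 <= (t%:R : R)^-1 <= 1.
Proof. by move=> t_ge1; rewrite invr_ge0 ler0n invf_le1 ?ler1n ?ltr0n. Qed.

Section VectorMatrixNorms.
Variable R : realType.

Definition norm2 n (v : 'cV[R]_n) := Num.sqrt (sqnorm2 v).

Lemma norm2E n (v : 'cV[R]_n) : norm2 v = l2norm (fun i => v i 0).
Proof. by []. Qed.

Lemma norm2_ge0 n (v : 'cV[R]_n) : 0 <= norm2 v.
Proof. exact: sqrtr_ge0. Qed.

Lemma sqr_norm2 n (v : 'cV[R]_n) : norm2 v ^+ 2 = sqnorm2 v.
Proof. exact: sqr_l2norm. Qed.

Lemma norm2B_le n (u v : 'cV[R]_n) : norm2 (u - v) <= norm2 u + norm2 v.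
Proof.
have -> : norm2 (u - v) = l2norm (fun i => u i 0 + - v i 0).
  by rewrite norm2E; congr l2norm; apply/funext => i; rewrite !mxE.
by rewrite -[norm2 v]l2normN; exact: l2normD.
Qed.

Lemma frobE m n (A : 'M[R]_(m, n)) :
  frob A = l2norm (fun u : 'I_m * 'I_n => A u.1 u.2).
Proof. by rewrite /frob pair_bigA. Qed.

Lemma frob_ge0 m n (A : 'M[R]_(m, n)) : 0 <= frob A.
Proof. exact: sqrtr_ge0. Qed.

Lemma norm2_mulmx_le m n (A : 'M[R]_(m, n)) (x : 'cV[R]_n) :
  norm2 (A *m x) <= frob A * norm2 x.
Proof.
rewrite /norm2 /frob -sqrtrM; last by apply: sumr_ge0 => i _; exact: sumr_sqr_ge0.
apply: ler_wsqrtr; rewrite /sqnorm2 mulr_suml; apply: ler_sum => i _.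
by rewrite mxE; exact: cauchy_schwarz.
Qed.

Lemma frobD_le m n (A B : 'M[R]_(m, n)) : frob (A + B) <= frob A + frob B.
Proof.
rewrite !frobE; under eq_fun do rewrite mxE; exact: l2normD.
Qed.

Lemma frobBC m n (A B : 'M[R]_(m, n)) : frob (A - B) = frob (B - A).
Proof.
by rewrite !frobE -l2normN; congr l2norm; apply/funext => u; rewrite !mxE opprB.
Qed.

Lemma frobN m n (A : 'M[R]_(m, n)) : frob (- A) = frob A.
Proof. by rewrite -[- A]add0r frobBC subr0. Qed.

Lemma frobB_le m n (A B : 'M[R]_(m, n)) : frob (A - B) <= frob A + frob B.
Proof. by rewrite -(frobN B) frobD_le. Qed.

Lemma frob_dist m n (A B : 'M[R]_(m, n)) : `|frob A - frob B| <= frob (A - B).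
Proof.
have frob_subr_le (X Y : 'M[R]_(m, n)) : frob X - frob Y <= frob (X - Y).
  by rewrite lerBlDr -{1}(subrK Y X) frobD_le.
by rewrite ler_norml lerNl opprB frob_subr_le frobBC frob_subr_le.
Qed.

Lemma sqr_frobB_le m n (A B : 'M[R]_(m, n)) :
  `|frob A ^+ 2 - frob B ^+ 2| <= (frob A + frob B) * frob (A - B).
Proof.
rewrite subr_sqr normrM mulrC ger0_norm ?addr_ge0 ?frob_ge0 //.
by apply: ler_wpM2l; [rewrite addr_ge0 ?frob_ge0 | exact: frob_dist].
Qed.

Lemma frob_le_mx_norm m n (A : 'M[R]_(m, n)) :
  frob A <= Num.sqrt (m * n)%:R * `|A|.
Proof.
rewrite -[`|A|]normr_id -sqrtr_sqr -sqrtrM // ler_wsqrtr //.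
have entry_le i j : A i j ^+ 2 <= `|A| ^+ 2.
  rewrite -real_normK ?num_real // lerXn2r ?nnegrE //.
  by change `|A| with (mx_norm A); rewrite mx_normrE; apply: (le_bigmax _ _ (i, j)).
apply: (@le_trans _ _ (\sum_(i < m) \sum_(j < n) `|A| ^+ 2)).
  by apply: ler_sum => i _; apply: ler_sum => j _; exact: entry_le.
by rewrite sumr_const card_ord sumr_const card_ord -mulrnA mulr_natl mulnC.
Qed.

Lemma compact_frob_bounded m n (A : set 'M[R]_(m, n)) :
  compact A -> exists B, forall L, A L -> frob L <= B.
Proof.
move=> /compact_bounded[N [_ N_bound]].
exists (Num.sqrt (m * n)%:R * (`|N| + 1)) => L AL.
apply: le_trans (frob_le_mx_norm L) (ler_wpM2l (sqrtr_ge0 _) _).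
by apply: N_bound AL; rewrite (le_lt_trans (ler_norm N)) ?ltrDl.
Qed.

End VectorMatrixNorms.

Section ReconstructionCost.
Variables (R : realType) (p r : nat) (G : {set {set 'I_p}}) (lam1 lam2 : R).
Hypotheses (lam1_gt0 : 0 < lam1) (lam2_ge0 : 0 <= lam2).

Local Notation lhat := (lhat G lam1 lam2).
Local Notation ell := (ell G lam1 lam2).

Lemma restr_inf_ge0 (s : 'cV[R]_p) g : 0 <= restr_inf s g.
Proof. by rewrite /restr_inf; elim/big_ind: _ => // x y; rewrite le_max => ->. Qed.

Lemma l1linf_ge0 (s : 'cV[R]_p) : 0 <= l1linf G s.
Proof. by apply: sumr_ge0 => g _; exact: restr_inf_ge0. Qed.

Lemma l1linf0 : l1linf G (0 : 'cV[R]_p) = 0.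
Proof.
apply: big1 => g _; rewrite /restr_inf; elim/big_ind: _ => //.
  by move=> x y -> ->; rewrite maxxx.
by move=> i _; rewrite mxE normr0.
Qed.

Lemma lhat00 d (L : 'M[R]_(p, r)) : lhat d L 0 0 = 2^-1 * sqnorm2 d.
Proof.
have sqnorm2_0 : sqnorm2 (0 : 'cV[R]_r) = 0 by apply: big1 => i _; rewrite mxE expr0n.
by rewrite /lhat mulmx0 !subr0 l1linf0 sqnorm2_0 !mulr0 !addr0.
Qed.

Lemma lhat_ge0 d (L : 'M[R]_(p, r)) x s : 0 <= lhat d L x s.
Proof.
have half_ge0 : 0 <= 2^-1 :> R by rewrite invr_ge0.
have lam1_half_ge0 : 0 <= lam1 / 2 by rewrite divr_ge0 // ltW.
rewrite /lhat -!sqr_norm2; apply/addr_ge0/mulr_ge0/l1linf_ge0 => //.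
by apply/addr_ge0; apply/mulr_ge0/sqr_ge0.
Qed.

Let lhat_range d (L : 'M[R]_(p, r)) :=
  range (fun xs : 'cV[R]_r * 'cV[R]_p => lhat d L xs.1 xs.2).

Let lhat_range_has_inf d L : has_inf (lhat_range d L).
Proof.
split; first by exists (lhat d L 0 0), (0, 0).
by exists 0 => _ [xs _ <-]; exact: lhat_ge0.
Qed.

Lemma ell_ge0 d (L : 'M[R]_(p, r)) : 0 <= ell d L.
Proof.
apply: lb_le_inf (lhat_range_has_inf d L).1 _.
by move=> _ [xs _ <-]; exact: lhat_ge0.
Qed.

Lemma ell_le_lhat d (L : 'M[R]_(p, r)) x s : ell d L <= lhat d L x s.
Proof. by apply: (ge_inf (lhat_range_has_inf d L).2); exists (x, s). Qed.

Lemma ell_near_min d (L : 'M[R]_(p, r)) e :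
  0 < e -> exists x s, lhat d L x s < ell d L + e.
Proof.
move=> e_gt0.
by have [_ [[x s] _ <-] near] := inf_adherent e_gt0 (lhat_range_has_inf d L); exists x, s.
Qed.

Lemma ell_le_sqr d (L : 'M[R]_(p, r)) M : norm2 d <= M -> ell d L <= 2^-1 * M ^+ 2.
Proof.
move=> d_le; apply: le_trans (ell_le_lhat d L 0 0) _.
rewrite lhat00 -sqr_norm2 ler_wpM2l ?invr_ge0 // lerXn2r ?nnegrE ?norm2_ge0 //.
exact: le_trans (norm2_ge0 d) d_le.
Qed.

Lemma ell_le_of_level d (L1 L2 : 'M[R]_(p, r)) V c : ell d L2 < V ->
  (forall x s, lhat d L2 x s <= V -> lhat d L1 x s <= lhat d L2 x s + c) ->
  ell d L1 <= ell d L2 + c.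
Proof.
move=> ell_lt_V lhat_le; apply/ler_addgt0Pr => e e_gt0.
set e' := Num.min e (V - ell d L2).
have e'_gt0 : 0 < e' by rewrite lt_min e_gt0 subr_gt0.
have e'_le_e : e' <= e by rewrite ge_min lexx.
have e'_le_gap : e' <= V - ell d L2 by rewrite ge_min lexx orbT.
have [x [s near]] := ell_near_min d L2 e'_gt0.
have lhat_le_V : lhat d L2 x s <= V by move: near e'_le_gap; lra.
have := lhat_le x s lhat_le_V; have := ell_le_lhat d L1 x s.
move: near e'_le_e; lra.
Qed.

Lemma lhat_level d (L : 'M[R]_(p, r)) x s V : lhat d L x s <= V ->
  norm2 (d - L *m x - s) <= Num.sqrt (2 * V) /\ norm2 x <= Num.sqrt (2 * V / lam1).
Proof.
have half_ge0 : 0 <= 2^-1 :> R by rewrite invr_ge0.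
have lam1_half_ge0 : 0 <= lam1 / 2 by rewrite divr_ge0 // ltW.
have res_ge0 := mulr_ge0 half_ge0 (sqr_ge0 (norm2 (d - L *m x - s))).
have reg_ge0 := mulr_ge0 lam1_half_ge0 (sqr_ge0 (norm2 x)).
have sparse_ge0 := mulr_ge0 lam2_ge0 (l1linf_ge0 s).
rewrite /lhat -!sqr_norm2 => lhat_le.
split; apply: ler_wsqrtr; rewrite -sqr_norm2 ?ler_pdivlMr //; move: lhat_le; nra.
Qed.

Lemma residualB (d s : 'cV[R]_p) (L1 L2 : 'M[R]_(p, r)) (x : 'cV[R]_r) :
  d - L1 *m x - s = (d - L2 *m x - s) - (L1 - L2) *m x.
Proof. by rewrite mulmxBl; apply/matrixP => i j; rewrite !mxE; ring. Qed.

Lemma lhat_lipschitz_on_level (V delta0 : R) :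
  exists K, forall d (L1 L2 : 'M[R]_(p, r)) x s, lhat d L2 x s <= V -> frob (L1 - L2) <= delta0 ->
  lhat d L1 x s <= lhat d L2 x s + K * frob (L1 - L2).
Proof.
set a0 := Num.sqrt (2 * V); set xi0 := Num.sqrt (2 * V / lam1).
exists (a0 * xi0 + delta0 * xi0 ^+ 2 / 2) => d L1 L2 x s lhat_le frob_le.
have [res_le x_le] := lhat_level lhat_le.
set a := d - L2 *m x - s; set D := L1 - L2.
have lhatB : lhat d L1 x s - lhat d L2 x s
    = 2^-1 * (norm2 (a - D *m x) ^+ 2 - norm2 a ^+ 2).
  by rewrite /lhat (residualB d s L1 L2) -/a -/D !sqr_norm2; ring.
have Dx_le : norm2 (D *m x) <= frob D * xi0.
  exact: le_trans (norm2_mulmx_le D x) (ler_wpM2l (frob_ge0 D) x_le).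
have a_ge0 := norm2_ge0 a; have Dx_ge0 := norm2_ge0 (D *m x).
have D_ge0 := frob_ge0 D.
have shifted_le : norm2 (a - D *m x) ^+ 2 <= (norm2 a + norm2 (D *m x)) ^+ 2.
  by rewrite lerXn2r ?nnegrE ?addr_ge0 ?norm2_ge0 ?norm2B_le.
have cross_le : norm2 a * norm2 (D *m x) <= a0 * (frob D * xi0).
  by rewrite ler_pM.
have sqr_Dx_le : norm2 (D *m x) ^+ 2 <= frob D * (delta0 * xi0 ^+ 2).
  apply: le_trans (_ : (frob D * xi0) ^+ 2 <= _).
    by rewrite lerXn2r ?nnegrE ?mulr_ge0 ?sqrtr_ge0.
  by rewrite exprMn expr2 -mulrA ler_wpM2l // ler_wpM2r ?sqr_ge0.
move: lhatB shifted_le cross_le sqr_Dx_le; lra.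
Qed.

Lemma ell_lipschitz (M delta0 : R) : exists K, forall d (L1 L2 : 'M[R]_(p, r)),
  norm2 d <= M -> frob (L1 - L2) <= delta0 ->
  `|ell d L1 - ell d L2| <= K * frob (L1 - L2).
Proof.
have [K lhat_lip] := lhat_lipschitz_on_level (2^-1 * M ^+ 2 + 1) delta0.
exists K => d L1 L2 d_le frob_le.
have ell_lt_level (L : 'M[R]_(p, r)) : ell d L < 2^-1 * M ^+ 2 + 1.
  by have := ell_le_sqr L d_le; lra.
have one_sided (A B : 'M[R]_(p, r)) : frob (A - B) <= delta0 ->
    ell d A <= ell d B + K * frob (A - B).
  by move=> AB_le; apply: (ell_le_of_level (ell_lt_level B)) => x s /lhat_lip; apply.
rewrite ler_norml lerNl opprB !lerBlDl; apply/andP; split; last exact: one_sided.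
by rewrite frobBC; apply: one_sided; rewrite frobBC.
Qed.

Variables (d : nat -> 'cV[R]_p) (M : R).
Hypothesis d_le : forall i, (1 <= i)%N -> norm2 (d i) <= M.

Local Notation emp_cost := (emp_cost G lam1 lam2 d).

Lemma emp_costE t (L : 'M[R]_(p, r)) : emp_cost t L =
  t%:R^-1 * \sum_(1 <= i < t.+1) ell (d i) L + lam1 / 2 * (t%:R^-1 * frob L ^+ 2).
Proof. by rewrite /emp_cost invfM; ring. Qed.

Lemma emp_cost_bounded t (L : 'M[R]_(p, r)) B : (1 <= t)%N -> frob L <= B ->
  `|emp_cost t L| <= 2^-1 * M ^+ 2 + lam1 / 2 * B ^+ 2.
Proof.
move=> t_ge1 L_le; have /andP[inv_ge0 inv_le1] := inv_natr_ge0_le1 R t_ge1.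
have lam1_half_ge0 : 0 <= lam1 / 2 by rewrite divr_ge0 // ltW.
rewrite emp_costE; apply: le_trans (ler_normD _ _) (lerD _ _).
  apply: avg_norm_le => // i /andP[i_ge1 _].
  by rewrite ger0_norm ?ell_ge0 ?ell_le_sqr ?d_le.
rewrite normrM ger0_norm // ler_wpM2l // normrM !ger0_norm ?sqr_ge0 //.
have : frob L ^+ 2 <= B ^+ 2 by rewrite lerXn2r ?nnegrE ?frob_ge0 ?(le_trans (frob_ge0 L)).
have := sqr_ge0 (frob L); nra.
Qed.

Lemma emp_cost_lipschitz B : exists K, forall t (L1 L2 : 'M[R]_(p, r)),
  (1 <= t)%N -> frob L1 <= B -> frob L2 <= B ->
  `|emp_cost t L1 - emp_cost t L2| <= K * frob (L1 - L2).
Proof.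
have [K ell_lip] := ell_lipschitz M (B + B).
exists (K + lam1 / 2 * (B + B)) => t L1 L2 t_ge1 L1_le L2_le.
have /andP[inv_ge0 inv_le1] := inv_natr_ge0_le1 R t_ge1.
have lam1_half_ge0 : 0 <= lam1 / 2 by rewrite divr_ge0 // ltW.
have D_le : frob (L1 - L2) <= B + B := le_trans (frobB_le L1 L2) (lerD L1_le L2_le).
have -> : emp_cost t L1 - emp_cost t L2 =
    t%:R^-1 * \sum_(1 <= i < t.+1) (ell (d i) L1 - ell (d i) L2)
    + lam1 / 2 * (t%:R^-1 * (frob L1 ^+ 2 - frob L2 ^+ 2)).
  by rewrite !emp_costE sumrB; ring.
rewrite mulrDl; apply: le_trans (ler_normD _ _) (lerD _ _).
  by apply: avg_norm_le => // i /andP[i_ge1 _]; apply: ell_lip; rewrite ?d_le.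
rewrite normrM ger0_norm // -mulrA ler_wpM2l // normrM ger0_norm //.
apply: le_trans (ler_piMl (normr_ge0 _) inv_le1) _.
apply: le_trans (sqr_frobB_le L1 L2) (ler_wpM2r (frob_ge0 _) (lerD L1_le L2_le)).
Qed.

End ReconstructionCost.

Theorem proposition4 (R : realType) (p r : nat) (lam1 lam2 M : R)
  (G : {set {set 'I_p}}) (d : nat -> 'cV[R]_p) (Lset : set 'M[R]_(p, r)) :
  (0 < p)%N -> (0 < r)%N -> 0 < lam1 -> 0 < lam2 ->
  (forall t, (1 <= t)%N -> Num.sqrt (sqnorm2 (d t)) <= M) ->
  compact Lset ->
  (exists C : R, forall t, (1 <= t)%N -> forall L, Lset L ->
     `|emp_cost G lam1 lam2 d t L| <= C) /\
  (exists K : R, forall t, (1 <= t)%N -> forall L1 L2, Lset L1 -> Lset L2 ->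
     `|emp_cost G lam1 lam2 d t L1 - emp_cost G lam1 lam2 d t L2|
       <= K * frob (L1 - L2)).
Proof.
move=> _ _ lam1_gt0 /ltW lam2_ge0 d_le /compact_frob_bounded[B Lset_le].
have {}d_le : forall t, (1 <= t)%N -> norm2 (d t) <= M := d_le.
split.
  exists (2^-1 * M ^+ 2 + lam1 / 2 * B ^+ 2) => t t_ge1 L /Lset_le L_le.
  exact: (emp_cost_bounded G lam1_gt0 lam2_ge0 d_le t_ge1 L_le).
have [K emp_cost_lip] := emp_cost_lipschitz r G lam1_gt0 lam2_ge0 d_le B.
exists K => t t_ge1 L1 L2 /Lset_le L1_le /Lset_le L2_le.
exact: (emp_cost_lip t L1 L2 t_ge1 L1_le L2_le).
Qed.
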